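(* Let $S \subseteq \mathbb{R}^n$ be nonempty, closed and convex, and let $F_i = f_i + g_i$, $i=1,\dots,m$, where each $f_i \colon S \to \mathbb{R}$ is continuously differentiable and each $g_i \colon S \to \mathbb{R}$ is convex. For $\ell \ge 0$ and $x \in S$ define (with values in $\mathbb{R}\cup\{\infty\}$) \[ u_\ell(x) := \sup_{y \in S} \min_{i} \left\{F_i(x) - F_i(y) - \frac{\ell}{2}\|x-y\|^2\right\}, \qquad w_\ell(x) := \sup_{y \in S} \min_{i} \left\{ \nabla f_i(x)^\top (x - y) + g_i(x) - g_i(y) - \frac{\ell}{2}\|x - y\|^2 \right\}, \] the minima being over $i = 1,\dots,m$. Then: (i) If each $f_i$ is $\mu_i$-convex for some $\mu_i \in \mathbb{R}$ and $\mu := \min_i \mu_i$, then for all $\ell > 0$ and $x \in S$: if $\mu \ge 0$, $u_0(x) \le w_\mu(x)$ and $u_\ell(x) \le w_{\mu+\ell}(x)$; otherwise $u_{-\mu+\ell}(x) \le w_\ell(x)$. (ii) If each $\nabla f_i$ is $L_i$-Lipschitz continuous for some $L_i > 0$ and $L := \max_i L_i$, then for all $\ell > 0$ and $x \in S$: $u_{L+\ell}(x) \le w_\ell(x)$, $u_0(x) \ge w_L(x)$, and $u_\ell(x) \ge w_{L+\ell}(x)$.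
   Context: A function $h \colon S \to \mathbb{R}$ is $\sigma$-convex ($\sigma\in\mathbb{R}$) if $h(\alpha x + (1-\alpha)y) \le \alpha h(x) + (1-\alpha)h(y) - \frac{\alpha(1-\alpha)\sigma}{2}\|x-y\|^2$ for all $x,y \in S$, $\alpha \in [0,1]$. *)

From HB Require Import structures.
From mathcomp Require Import all_boot all_order all_algebra.
From mathcomp Require Import all_classical all_reals all_analysis.
Set Implicit Arguments. Unset Strict Implicit. Unset Printing Implicit Defensive.
Import Order.TTheory GRing.Theory Num.Theory.
Import numFieldNormedType.Exports.
Local Open Scope classical_set_scope.
Local Open Scope ring_scope.

Section Defs.
Context {R : realType} {n : nat}.

Definition dotv (x y : 'rV[R]_n) : R := \sum_(j < n) x ord0 j * y ord0 j.
Definition sqnorm (x : 'rV[R]_n) : R := dotv x x.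
Definition enorm (x : 'rV[R]_n) : R := Num.sqrt (sqnorm x).

Definition grad (f : 'rV[R]_n -> R) (x : 'rV[R]_n) : 'rV[R]_n :=
  \row_(j < n) ('d f x : 'rV[R]_n -> R) (delta_mx ord0 j).

Definition convex_setS (S : set 'rV[R]_n) : Prop :=
  forall x y a, S x -> S y -> 0 <= a <= 1 -> S (a *: x + (1 - a) *: y).

Definition convex_fun_on (S : set 'rV[R]_n) (h : 'rV[R]_n -> R) : Prop :=
  forall x y a, S x -> S y -> 0 <= a <= 1 ->
    h (a *: x + (1 - a) *: y) <= a * h x + (1 - a) * h y.

Definition sigma_convex (S : set 'rV[R]_n) (h : 'rV[R]_n -> R) (s : R) : Prop :=
  forall x y a, S x -> S y -> 0 <= a <= 1 ->
    h (a *: x + (1 - a) *: y) <=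
      a * h x + (1 - a) * h y - a * (1 - a) * s / 2 * sqnorm (x - y).

Definition C1_on (S : set 'rV[R]_n) (f : 'rV[R]_n -> R) : Prop :=
  (forall x, S x -> differentiable f x) /\ {within S, continuous (grad f)}.

Definition grad_lipschitz_on (S : set 'rV[R]_n) (f : 'rV[R]_n -> R) (L : R) : Prop :=
  forall x y, S x -> S y -> enorm (grad f x - grad f y) <= L * enorm (x - y).

Local Open Scope ereal_scope.

Definition u_merit (m : nat) (S : set 'rV[R]_n) (F : 'I_m -> 'rV[R]_n -> R)
  (l : R) (x : 'rV[R]_n) : \bar R :=
  ereal_sup [set \big[mine/+oo]_(i < m)
     ((F i x - F i y - l / 2 * sqnorm (x - y))%R)%:E | y in S].

Definition w_merit (m : nat) (S : set 'rV[R]_n) (f g : 'I_m -> 'rV[R]_n -> R)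
  (l : R) (x : 'rV[R]_n) : \bar R :=
  ereal_sup [set \big[mine/+oo]_(i < m)
     ((dotv (grad (f i) x) (x - y) + g i x - g i y - l / 2 * sqnorm (x - y))%R)%:E
     | y in S].

End Defs.

From HB Require Import structures.
From mathcomp Require Import all_boot all_order all_algebra.
From mathcomp Require Import all_classical all_reals all_analysis.
From mathcomp Require Import ring lra.
Import Order.TTheory GRing.Theory Num.Theory.
Import numFieldNormedType.Exports.
Local Open Scope classical_set_scope.
Local Open Scope ring_scope.

(* Both merit functions are suprema over y in S of minima over i of terms that
   differ only in their f-part, F_i(x) - F_i(y) in u against the linearisation
   grad f_i(x)^T (x - y) in w, and in the weight of the quadratic.  Hence a
   quadratic bound on the first-order Taylor remainder
   f_i(y) - f_i(x) - grad f_i(x)^T (y - x), traded against a shift of l,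
   compares the terms pointwise, and monotonicity of min and sup carries the
   comparison over to u and w.  mu_i-convexity bounds the remainder below by
   mu_i/2 |y - x|^2 (let the difference quotients along [x, y] tend to the
   derivative); an L_i-Lipschitz gradient bounds its absolute value by
   L_i/2 |y - x|^2 (a monotonicity argument on the segment and
   Cauchy-Schwarz). *)

Section InnerProduct.
Context {R : realType} {n : nat}.
Implicit Types a b c : 'rV[R]_n.

Lemma dotvC a b : dotv a b = dotv b a.
Proof. by apply: eq_bigr => j _; rewrite mulrC. Qed.

Lemma dotvDr a b c : dotv a (b + c) = dotv a b + dotv a c.
Proof. by rewrite /dotv -big_split; apply: eq_bigr => j _; rewrite mxE mulrDr. Qed.

Lemma dotvZr k a b : dotv a (k *: b) = k * dotv a b.
Proof. by rewrite /dotv mulr_sumr; apply: eq_bigr => j _; rewrite mxE mulrCA. Qed.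

Lemma dotvNr a b : dotv a (- b) = - dotv a b.
Proof. by rewrite -scaleN1r dotvZr mulN1r. Qed.

Lemma dotvBr a b c : dotv a (b - c) = dotv a b - dotv a c.
Proof. by rewrite dotvDr dotvNr. Qed.

Lemma dotvZl k a b : dotv (k *: a) b = k * dotv a b.
Proof. by rewrite dotvC dotvZr dotvC. Qed.

Lemma dotvBl a b c : dotv (a - b) c = dotv a c - dotv b c.
Proof. by rewrite dotvC dotvBr !(dotvC c). Qed.

Lemma sqnorm_ge0 a : 0 <= sqnorm a.
Proof. by apply: sumr_ge0 => j _; rewrite -expr2 sqr_ge0. Qed.

Lemma sqnormN a : sqnorm (- a) = sqnorm a.
Proof. by rewrite /sqnorm dotvNr dotvC dotvNr opprK. Qed.

Lemma sqnormB a b : sqnorm (a - b) = sqnorm a - 2 * dotv a b + sqnorm b.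
Proof. by rewrite /sqnorm dotvBl !dotvBr (dotvC b a); ring. Qed.

Lemma sqnorm_eq0_dotv a b : sqnorm a = 0 -> dotv a b = 0.
Proof.
move=> /eqP; rewrite psumr_eq0 => [/allP a0|j _]; last by rewrite -expr2 sqr_ge0.
apply: big1 => j _; have /a0 : j \in index_enum 'I_n by rewrite mem_index_enum.
by rewrite /= -expr2 sqrf_eq0 => /eqP ->; rewrite mul0r.
Qed.

Lemma enorm_ge0 a : 0 <= enorm a.
Proof. exact: sqrtr_ge0. Qed.

Lemma sqr_enorm a : enorm a ^+ 2 = sqnorm a.
Proof. by rewrite sqr_sqrtr // sqnorm_ge0. Qed.

Lemma enormN a : enorm (- a) = enorm a.
Proof. by rewrite /enorm sqnormN. Qed.

Lemma enormZ k a : 0 <= k -> enorm (k *: a) = k * enorm a.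
Proof.
move=> k0; rewrite /enorm /sqnorm dotvZl dotvZr mulrA -expr2 sqrtrM ?sqr_ge0 //.
by rewrite sqrtr_sqr ger0_norm.
Qed.

Lemma dotv_le_enorm a b : dotv a b <= enorm a * enorm b.
Proof.
set s := enorm a; set t := enorm b.
have [/eqP|st0] := eqVneq (s * t) 0.
  rewrite mulf_eq0 => /orP[]/eqP st0.
    by rewrite sqnorm_eq0_dotv ?mulr_ge0 ?enorm_ge0 // -sqr_enorm -/s st0 expr0n.
  by rewrite dotvC sqnorm_eq0_dotv ?mulr_ge0 ?enorm_ge0 // -sqr_enorm -/t st0 expr0n.
have st_gt0 : 0 < s * t by rewrite lt0r st0 mulr_ge0 ?enorm_ge0.
(* [0 <= |t a - s b|^2 = 2 s t (s t - a.b)] *)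
have := sqnorm_ge0 (t *: a - s *: b).
rewrite sqnormB /sqnorm !dotvZl !dotvZr -!/(sqnorm _) -!sqr_enorm -/s -/t => ge0.
by rewrite -(ler_pM2l st_gt0); nra.
Qed.

Lemma cauchy_schwarz a b : `|dotv a b| <= enorm a * enorm b.
Proof.
by rewrite ler_norml dotv_le_enorm andbT lerNl -dotvNr -(enormN b) dotv_le_enorm.
Qed.

End InnerProduct.

Section Calculus.
Context {R : realType} {n : nat}.
Implicit Types (f : 'rV[R]_n -> R) (x d : 'rV[R]_n).

Lemma diff_gradE f x v : 'd f x v = dotv (grad f x) v.
Proof.
rewrite {1}(row_sum_delta v) linear_sum /dotv.
by apply: eq_bigr => j _; rewrite linearZ /= mxE mulrC.
Qed.

Lemma is_derive_line f x d t : differentiable f (x + t *: d) ->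
  is_derive t 1 (fun s => f (x + s *: d)) (dotv (grad f (x + t *: d)) d).
Proof.
move=> df.
have quotE : (fun h : R => h^-1 *: (((fun s => f (x + s *: d)) \o shift t) (h *: 1)
                                    - f (x + t *: d)))
  = (fun h => h^-1 *: ((f \o shift (x + t *: d)) (h *: d) - f (x + t *: d))).
  apply/funext => h /=; congr (_ *: (f _ - _)).
  by apply/rowP => j; rewrite !mxE /GRing.scale /=; ring.
apply: DeriveDef; first by rewrite /derivable quotE; exact: diff_derivable.
by rewrite /derive quotE -/(derive f _ d) deriveE // diff_gradE.
Qed.

End Calculus.

Section RealLine.
Context {R : realType}.
Implicit Types phi psi dphi dpsi : R -> R.

Lemma ler0_is_derive_nincr01 psi dpsi :
  (forall t : R, 0 <= t <= 1 -> is_derive t 1 psi (dpsi t)) ->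
  (forall t : R, 0 < t < 1 -> dpsi t <= 0) -> psi 1 <= psi 0.
Proof.
move=> dpsiP dpsi_le0.
have in01 (t : R) : t \in `]0, 1[ -> 0 <= t <= 1.
  by rewrite in_itv /= => /andP[t0 t1]; rewrite !ltW.
apply: (ler0_derive1_nincr _ _ _ (lexx 0) ler01 (lexx 1)).
- by move=> t /in01 /dpsiP [].
- move=> t t01; rewrite derive1E; have [_ ->] := dpsiP t (in01 t t01).
  by apply: dpsi_le0; rewrite in_itv /= in t01.
- apply: continuous_in_subspaceT => t; rewrite inE /= in_itv /= => t01.
  apply: differentiable_continuous; apply/derivable1_diffP.
  by have [] := dpsiP t t01.
Qed.

Lemma taylor1_remainder_le01 phi dphi (M : R) :
  (forall t : R, 0 <= t <= 1 -> is_derive t 1 phi (dphi t)) ->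
  (forall t : R, 0 <= t <= 1 -> `|dphi t - dphi 0| <= M * t) ->
  `|phi 1 - phi 0 - dphi 0| <= M / 2.
Proof.
move=> dphiP dphi_lip.
have quad_derive (e c K t : R) : 0 <= t <= 1 ->
    is_derive t 1 (fun s => e * phi s - c * s - K * s ^+ 2)
      (e * dphi t - c - K * (2 * t)).
  move=> /dphiP dphit.
  have -> : (fun s => e * phi s - c * s - K * s ^+ 2)
            = e \*: phi - c \*: id - K \*: id ^+ 2.
    by apply/funext => s.
  by apply: is_derive_eq; rewrite /GRing.scale /= !mulr1 expr1; ring.
have signed_bound (e : R) : `|e| = 1 -> e * (phi 1 - phi 0 - dphi 0) <= M / 2.
  move=> e1; have := ler0_is_derive_nincr01 _ _ (quad_derive e (e * dphi 0) (M / 2)).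
  rewrite !(mul0r, mulr0, expr0n, expr1n, mulr1, subr0) /=.
  suff dpsi_le0 : forall t : R, 0 < t < 1 ->
      e * dphi t - e * dphi 0 - M / 2 * (2 * t) <= 0.
    by move=> /(_ dpsi_le0); lra.
  move=> t /andP[/ltW t0 /ltW t1].
  have := dphi_lip t; rewrite t0 t1 => /(_ isT).
  have := ler_norm (e * (dphi t - dphi 0)); rewrite normrM e1 mul1r.
  lra.
apply/ler_normlP; split.
- by rewrite -mulN1r signed_bound ?normrN ?normr1.
- by rewrite -[leLHS]mul1r signed_bound ?normr1.
Qed.

End RealLine.

Section FirstOrderBounds.
Context {R : realType} {n : nat}.
Implicit Types (S : set 'rV[R]_n) (f : 'rV[R]_n -> R) (x y : 'rV[R]_n).

Lemma convex_setS_segment S x y (t : R) : convex_setS S -> S x -> S y ->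
  0 <= t <= 1 -> S (x + t *: (y - x)).
Proof.
move=> cS Sx Sy t01; have -> : x + t *: (y - x) = t *: y + (1 - t) *: x.
  by apply/rowP => j; rewrite !mxE; ring.
exact: cS.
Qed.

Lemma grad_lipschitz_first_order S f L x y : convex_setS S ->
  (forall z, S z -> differentiable f z) -> grad_lipschitz_on S f L ->
  S x -> S y ->
  `|f y - f x - dotv (grad f x) (y - x)| <= L / 2 * sqnorm (y - x).
Proof.
move=> cS df Lf Sx Sy; set d := y - x.
have Sseg t : 0 <= t <= 1 -> S (x + t *: d) by exact: convex_setS_segment.
have := @taylor1_remainder_le01 _ (fun s => f (x + s *: d))
  (fun t => dotv (grad f (x + t *: d)) d) (L * sqnorm d).
rewrite /= scale0r scale1r addr0 subrKC mulrAC; apply.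
  by move=> t t01; apply/is_derive_line/df/Sseg.
move=> t t01; rewrite -dotvBl.
apply: le_trans (cauchy_schwarz _ _) _.
apply: le_trans (ler_wpM2r (enorm_ge0 _) (Lf _ _ (Sseg _ t01) Sx)) _.
rewrite addrC addKr enormZ; last by case/andP: t01.
by rewrite -sqr_enorm [leRHS](_ : _ = L * (t * enorm d) * enorm d) //; ring.
Qed.

Lemma sigma_convex_first_order S f (s : R) x y : sigma_convex S f s ->
  differentiable f x -> S x -> S y ->
  f x + dotv (grad f x) (y - x) + s / 2 * sqnorm (y - x) <= f y.
Proof.
move=> sc df Sx Sy; set d := y - x; set D := sqnorm d.
set C := f y - f x - s / 2 * D.
have quot_le : \forall h \near 0^'+,
    h^-1 * (f (h *: d + x) - f x) <= C + h * (s / 2 * D).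
  near=> h.
  have h0 : 0 < h by near: h; exact: nbhs_right_gt.
  have h1 : h <= 1 by near: h; apply: nbhs_right_le; exact: ltr01.
  have := sc y x h Sy Sx; rewrite ltW //= h1 => /(_ isT).
  have -> : h *: y + (1 - h) *: x = h *: d + x by apply/rowP => j; rewrite !mxE; ring.
  by rewrite -/d -/D ler_pdivrMl // /C; nra.
have bound_cvg : (fun h : R => C + h * (s / 2 * D)) @ 0^'+ --> C + 0 * (s / 2 * D).
  apply: cvg_at_right_filter; apply: cvgD; first exact: cvg_cst.
  by apply: cvgMl; exact: cvg_id.
have := ler_cvg_to (cvg_dnbhs_at_right (diff_derivable df)) bound_cvg quot_le.
rewrite -/(derive f x d) deriveE // diff_gradE mul0r addr0 /C.
by move=> /(_ (at_right_proper_filter _)); lra.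
Unshelve. all: by end_near.
Qed.

End FirstOrderBounds.

Section MeritComparison.
Context {R : realType} {n m : nat}.

Lemma ereal_sup_bigmin_le {T : Type} (D : set T) (A B : 'I_m -> T -> R) :
  (forall i y, D y -> A i y <= B i y) ->
  (ereal_sup [set \big[mine/+oo]_(i < m) (A i y)%:E | y in D] <=
   ereal_sup [set \big[mine/+oo]_(i < m) (B i y)%:E | y in D])%E.
Proof.
move=> AB; apply: ge_ereal_sup => _ [y Dy <-].
apply: le_trans (ereal_sup_ubound _); last by exists y.
by apply: le_bigmin2 => i _; rewrite lee_fin AB.
Qed.

Variables (S : set 'rV[R]_n) (f g : 'I_m -> 'rV[R]_n -> R) (x : 'rV[R]_n).

Let F i y := f i y + g i y.

Lemma u_merit_le_w_merit (s : 'I_m -> R) (l1 l2 : R) :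
  (forall i y, S y ->
     f i x + dotv (grad (f i) x) (y - x) + s i / 2 * sqnorm (y - x) <= f i y) ->
  (forall i, l2 - l1 <= s i) ->
  (u_merit S F l1 x <= w_merit S f g l2 x)%E.
Proof.
move=> lb sl; apply: ereal_sup_bigmin_le => i y Sy.
have := lb i y Sy; have := sl i; have := sqnorm_ge0 (x - y).
by rewrite -[x - y]opprB dotvNr sqnormN /F; nra.
Qed.

Lemma w_merit_le_u_merit (s : 'I_m -> R) (l1 l2 : R) :
  (forall i y, S y ->
     f i y <= f i x + dotv (grad (f i) x) (y - x) + s i / 2 * sqnorm (y - x)) ->
  (forall i, s i <= l2 - l1) ->
  (w_merit S f g l2 x <= u_merit S F l1 x)%E.
Proof.
move=> ub sl; apply: ereal_sup_bigmin_le => i y Sy.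
have := ub i y Sy; have := sl i; have := sqnorm_ge0 (x - y).
by rewrite -[x - y]opprB dotvNr sqnormN /F; nra.
Qed.

End MeritComparison.

Theorem theorem4p1 (R : realType) (n m : nat) (S : set 'rV[R]_n)
  (f g : 'I_m -> 'rV[R]_n -> R) :
  (0 < m)%N -> S !=set0 -> closed S -> convex_setS S ->
  (forall i, C1_on S (f i)) -> (forall i, convex_fun_on S (g i)) ->
  let F := fun i x => f i x + g i x in
  (* (i) *)
  (forall (mu_ : 'I_m -> R) (mu : R),
     (forall i, sigma_convex S (f i) (mu_ i)) ->
     (forall i, mu <= mu_ i) -> (exists i, mu_ i = mu) ->
     forall (l : R) (x : 'rV[R]_n), 0 < l -> S x ->
       (0 <= mu ->
          (u_merit S F 0 x <= w_merit S f g mu x)%E /\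
          (u_merit S F l x <= w_merit S f g (mu + l) x)%E) /\
       (mu < 0 -> (u_merit S F (- mu + l) x <= w_merit S f g l x)%E)) /\
  (* (ii) *)
  (forall (L_ : 'I_m -> R) (L : R),
     (forall i, 0 < L_ i) -> (forall i, grad_lipschitz_on S (f i) (L_ i)) ->
     (forall i, L_ i <= L) -> (exists i, L_ i = L) ->
     forall (l : R) (x : 'rV[R]_n), 0 < l -> S x ->
       (u_merit S F (L + l) x <= w_merit S f g l x)%E /\
       (w_merit S f g L x <= u_merit S F 0 x)%E /\
       (w_merit S f g (L + l) x <= u_merit S F l x)%E).
Proof.
move=> _ _ _ cS C1 _ F; have df i := (C1 i).1.
split=> [mu_ mu sc mu_le _ l x _ Sx | L_ L _ Lf L_le _ l x _ Sx].
  have u_le_w l1 l2 : l2 - l1 <= mu -> (u_merit S F l1 x <= w_merit S f g l2 x)%E.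
    move=> l12; apply: (u_merit_le_w_merit _ _ _ _ mu_) => [i y Sy|i].
      exact: sigma_convex_first_order (sc i) (df i x Sx) Sx Sy.
    exact: le_trans l12 (mu_le i).
  by split=> [mu0|mu0]; [split|]; apply: u_le_w; lra.
have taylor i y : S y -> `|f i y - f i x - dotv (grad (f i) x) (y - x)|
                          <= L_ i / 2 * sqnorm (y - x).
  exact: grad_lipschitz_first_order cS (df i) (Lf i) Sx.
split.
  apply: (u_merit_le_w_merit _ _ _ _ (fun i => - L_ i)) => [i y Sy|i].
    by have /ler_normlP[] := taylor i y Sy; rewrite !mulNr; lra.
  by have := L_le i; lra.
have w_le_u l1 l2 : L <= l2 - l1 -> (w_merit S f g l2 x <= u_merit S F l1 x)%E.
  move=> l12; apply: (w_merit_le_u_merit _ _ _ _ L_) => [i y Sy|i].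
    by have /ler_normlP[] := taylor i y Sy; lra.
  exact: le_trans (L_le i) l12.
by split; apply: w_le_u; lra.
Qed.
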